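(* Let $\mathbb{K}$ be an $\aleph_0$-complete field. Let $x=(x_1,\ldots,x_n)$, $Y=(Y_1,\ldots,Y_m)$, $f=(f_1,\ldots,f_r)\in\mathbb{K}[\![x]\!][Y]^r$ and $J_i\subset\{1,\ldots,n\}$ for $i=1,\ldots,m$. Then there exists a map $\nu:\mathbb{N}^m\to\mathbb{N}$ such that: if $c=(c_1,\ldots,c_m)\in\mathbb{N}^m$ and $y'=(y'_1,\ldots,y'_m)$ with $y'_i\in\mathbb{K}[\![x_{J_i}]\!]$ for $i=1,\ldots,m$ satisfies $f(y')\equiv 0$ modulo $(x)^{\nu(c)}$ and $\mathrm{ord}(y'_i)=c_i$ for $i=1,\ldots,m$, then there exist $y_i\in\mathbb{K}[\![x_{J_i}]\!]$, $i=1,\ldots,m$, such that $y=(y_1,\ldots,y_m)$ satisfies $f(y)=0$ and $\mathrm{ord}(y_i)=c_i$ for all $i=1,\ldots,m$.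
   Context: A field $\mathbb{K}$ is called $\aleph_0$-complete if every countable system $\mathcal S$ of polynomial equations with coefficients in $\mathbb{K}$ (in a countable number of indeterminates) has a solution in $\mathbb{K}$ if and only if every finite sub-system of $\mathcal S$ has a solution in $\mathbb{K}$. For $J\subset\{1,\ldots,n\}$, $\mathbb{K}[\![x_J]\!]$ denotes the subring of $\mathbb{K}[\![x]\!]$ of formal power series in the variables $x_j$, $j\in J$ only. $(x)$ is the maximal ideal of $\mathbb{K}[\![x]\!]$. For a power series $g$, $\mathrm{ord}(g)$ is the smallest total degree of a monomial appearing in $g$ with nonzero coefficient. *)

From mathcomp Require Import all_boot all_order all_algebra.
Set Implicit Arguments. Unset Strict Implicit. Unset Printing Implicit Defensive.
Import GRing.Theory.
Local Open Scope ring_scope.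

(* A polynomial with coefficients in K in the countably many indeterminates
   X_0, X_1, ... : a finite list of terms (coefficient, exponent list), where
   the exponent of X_j in the monomial [s] is [nth 0 s j]. *)
Definition kpoly (K : fieldType) := seq (K * seq nat).

Definition keval (K : fieldType) (p : kpoly K) (z : nat -> K) : K :=
  \sum_(t <- p) t.1 * \prod_(j < size t.2) z j ^+ nth 0%N t.2 j.

Definition aleph0_complete (K : fieldType) : Prop :=
  forall S : nat -> kpoly K,
    (exists z : nat -> K, forall i, keval (S i) z = 0) <->
    (forall F : seq nat, exists z : nat -> K, forall i, i \in F -> keval (S i) z = 0).

Definition mono (n : nat) := {ffun 'I_n -> nat}.
Definition mdeg n (b : mono n) : nat := (\sum_(i < n) b i)%N.

Definition ps (K : fieldType) (n : nat) := mono n -> K.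

Definition ps0 (K : fieldType) (n : nat) : ps K n := fun _ => 0.
Definition ps1 (K : fieldType) (n : nat) : ps K n := fun b => if b == [ffun => 0%N] then 1 else 0.
Definition ps_add K n (a c : ps K n) : ps K n := fun b => a b + c b.
(* Cauchy product: (a c)_beta = sum_{alpha <= beta} a_alpha c_{beta - alpha};
   alpha ranges over functions 'I_n -> 'I_(|beta|+1) with alpha <= beta. *)
Definition ps_mul K n (a c : ps K n) : ps K n := fun b =>
  \sum_(al : {ffun 'I_n -> 'I_(mdeg b).+1} | [forall i, (al i <= b i)%N])
     a [ffun i => nat_of_ord (al i)] * c [ffun i => (b i - al i)%N].
Definition ps_pow K n (a : ps K n) (k : nat) : ps K n := iter k (ps_mul a) (@ps1 K n).

Definition in_subring K n (J : {set 'I_n}) (g : ps K n) : Prop :=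
  forall b : mono n, (exists j, (j \notin J) && (b j != 0%N)) -> g b = 0.

Definition in_pow_max_ideal K n (g : ps K n) (N : nat) : Prop :=
  forall b : mono n, (mdeg b < N)%N -> g b = 0.

Definition ps_is0 K n (g : ps K n) : Prop := forall b, g b = 0.

Definition ps_ord_eq K n (g : ps K n) (c : nat) : Prop :=
  (exists b : mono n, mdeg b = c /\ g b != 0) /\
  (forall b : mono n, (mdeg b < c)%N -> g b = 0).

Definition pspoly K n m := seq (ps K n * mono m).

Definition pseval K n m (p : pspoly K n m) (y : 'I_m -> ps K n) : ps K n :=
  \big[@ps_add K n / @ps0 K n]_(t <- p)
     ps_mul t.1 (\big[@ps_mul K n / @ps1 K n]_(i < m) ps_pow (y i) (t.2 i)).

(* Fix c.  The requirements "y_i in K[[x_{J_i}]], ord y_i = c_i, f(y) = 0" form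
   a countable system of polynomial equations over K in the coefficients
   y_{i,b} of the y_i and in auxiliary unknowns w_{i,b}: the coefficients
   outside K[[x_{J_i}]] or of degree < c_i vanish, every coefficient of every
   f_k(y) vanishes, and sum_{|b| = c_i} y_{i,b} w_{i,b} = 1, which says that y_i
   has a nonzero coefficient of degree c_i.  A finite subsystem only involves
   coefficients of the f_k(y) of degree < N for some N, so it is solved by any
   solution modulo (x)^N.  Hence if there is no exact solution,
   aleph_0-completeness gives an N with no solution modulo (x)^N either, and
   nu(c) is that N. *)

From mathcomp Require Import all_boot all_order all_algebra.
From Stdlib Require Import FunctionalExtensionality IndefiniteDescription Classical.
Set Implicit Arguments. Unset Strict Implicit. Unset Printing Implicit Defensive.
Import GRing.Theory.
Local Open Scope ring_scope.

Section PolynomialFunctions.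
Variable K : fieldType.

Definition kpoly_fun (F : (nat -> K) -> K) := exists p : kpoly K, keval p =1 F.

Lemma kpoly_fun_ext (F G : (nat -> K) -> K) : F =1 G -> kpoly_fun F -> kpoly_fun G.
Proof. by move=> eFG [p hp]; exists p => z; rewrite hp eFG. Qed.

Lemma kpoly_fun_cst (a : K) : kpoly_fun (fun _ => a).
Proof.
by exists [:: (a, [::])] => z; rewrite /keval big_seq1 big_ord0 mulr1.
Qed.

Lemma kpoly_fun_var (j : nat) : kpoly_fun (fun z => z j).
Proof.
exists [:: (1, rcons (nseq j 0%N) 1%N)] => z.
rewrite /keval big_seq1 mul1r /= size_rcons size_nseq big_ord_recr /=.
rewrite nth_rcons size_nseq ltnn eqxx expr1 big1 ?mul1r // => i _.
by rewrite nth_rcons size_nseq ltn_ord nth_nseq ltn_ord expr0.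
Qed.

Lemma kpoly_fun_add (F G : (nat -> K) -> K) :
  kpoly_fun F -> kpoly_fun G -> kpoly_fun (fun z => F z + G z).
Proof.
by move=> [p hp] [q hq]; exists (p ++ q) => z; rewrite /keval big_cat -!/(keval _ z) hp hq.
Qed.

Definition kmonomial (s : seq nat) (z : nat -> K) := \prod_(j < size s) z j ^+ nth 0%N s j.

Lemma kmonomial_widen (s : seq nat) (z : nat -> K) (N : nat) :
  (size s <= N)%N -> kmonomial s z = \prod_(j < N) z j ^+ nth 0%N s j.
Proof.
move=> le_sN; rewrite /kmonomial (big_ord_widen N (fun j => z j ^+ nth 0%N s j) le_sN).
rewrite big_mkcond; apply: eq_bigr => j _; case: ifP => // /negbT.
by rewrite -leqNgt => le_sj; rewrite nth_default // expr0.
Qed.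

Definition exponents_add (s t : seq nat) : seq nat :=
  mkseq (fun j => nth 0%N s j + nth 0%N t j)%N (maxn (size s) (size t)).

Lemma kmonomialD (s t : seq nat) (z : nat -> K) :
  kmonomial (exponents_add s t) z = kmonomial s z * kmonomial t z.
Proof.
rewrite (kmonomial_widen z (leq_maxl (size s) (size t))).
rewrite (kmonomial_widen z (leq_maxr (size s) (size t))) /kmonomial size_mkseq -big_split.
by apply: eq_bigr => j _; rewrite nth_mkseq // exprD.
Qed.

Lemma kpoly_fun_mul (F G : (nat -> K) -> K) :
  kpoly_fun F -> kpoly_fun G -> kpoly_fun (fun z => F z * G z).
Proof.
move=> [p hp] [q hq].
exists [seq (a.1 * b.1, exponents_add a.2 b.2) | a <- p, b <- q] => z.
rewrite -hp -hq /keval.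
rewrite (big_allpairs_dep (op := +%R) (h := fun a b => (a.1 * b.1, exponents_add a.2 b.2))).
rewrite mulr_suml; apply: eq_bigr => a _; rewrite mulr_sumr; apply: eq_bigr => b _ /=.
by rewrite -[X in _ * X]/(kmonomial _ z) kmonomialD mulrACA.
Qed.

Lemma kpoly_fun_sum (I : Type) (s : seq I) (P : pred I) (F : (nat -> K) -> I -> K) :
  (forall i, kpoly_fun (F^~ i)) -> kpoly_fun (fun z => \sum_(i <- s | P i) F z i).
Proof.
move=> hF; elim: s => [|i s IHs].
  by apply: kpoly_fun_ext (kpoly_fun_cst 0) => z; rewrite big_nil.
case Pi: (P i); last by apply: kpoly_fun_ext IHs => z; rewrite big_cons Pi.
by apply: kpoly_fun_ext (kpoly_fun_add (hF i) IHs) => z; rewrite big_cons Pi.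
Qed.

End PolynomialFunctions.

Section CoefficientwisePolynomial.
Variables (K : fieldType) (n : nat).

Definition ps_kpoly_fun (A : (nat -> K) -> ps K n) := forall b, kpoly_fun (fun z => A z b).

Lemma ps_kpoly_fun_ext (A B : (nat -> K) -> ps K n) :
  (forall z, A z =1 B z) -> ps_kpoly_fun A -> ps_kpoly_fun B.
Proof. by move=> eAB hA b; apply: kpoly_fun_ext (hA b) => z; rewrite eAB. Qed.

Lemma ps_kpoly_fun_cst (g : ps K n) : ps_kpoly_fun (fun _ => g).
Proof. by move=> b; apply: kpoly_fun_cst. Qed.

Lemma ps_kpoly_fun_add (A B : (nat -> K) -> ps K n) :
  ps_kpoly_fun A -> ps_kpoly_fun B -> ps_kpoly_fun (fun z => ps_add (A z) (B z)).
Proof. by move=> hA hB b; apply: kpoly_fun_add. Qed.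

Lemma ps_kpoly_fun_mul (A B : (nat -> K) -> ps K n) :
  ps_kpoly_fun A -> ps_kpoly_fun B -> ps_kpoly_fun (fun z => ps_mul (A z) (B z)).
Proof. by move=> hA hB b; apply: kpoly_fun_sum => al; apply: kpoly_fun_mul. Qed.

Lemma ps_kpoly_fun_pow (A : (nat -> K) -> ps K n) (k : nat) :
  ps_kpoly_fun A -> ps_kpoly_fun (fun z => ps_pow (A z) k).
Proof.
move=> hA; elim: k => [|k IHk]; first exact: ps_kpoly_fun_cst.
exact: ps_kpoly_fun_mul.
Qed.

Lemma ps_kpoly_fun_big (I : Type) (s : seq I) (P : pred I)
    (op : ps K n -> ps K n -> ps K n) (idx : ps K n) (F : (nat -> K) -> I -> ps K n) :
  (forall A B, ps_kpoly_fun A -> ps_kpoly_fun B -> ps_kpoly_fun (fun z => op (A z) (B z))) ->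
  (forall i, ps_kpoly_fun (F^~ i)) ->
  ps_kpoly_fun (fun z => \big[op/idx]_(i <- s | P i) F z i).
Proof.
move=> hop hF; elim: s => [|i s IHs].
  by apply: ps_kpoly_fun_ext (ps_kpoly_fun_cst idx) => z b; rewrite big_nil.
case Pi: (P i); last by apply: ps_kpoly_fun_ext IHs => z b; rewrite big_cons Pi.
by apply: ps_kpoly_fun_ext (hop _ _ (hF i) IHs) => z b; rewrite big_cons Pi.
Qed.

Lemma ps_kpoly_fun_pseval (m : nat) (p : pspoly K n m) (Y : (nat -> K) -> 'I_m -> ps K n) :
  (forall i, ps_kpoly_fun (Y^~ i)) -> ps_kpoly_fun (fun z => pseval p (Y z)).
Proof.
move=> hY; apply: ps_kpoly_fun_big => [|t]; first exact: ps_kpoly_fun_add.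
apply: ps_kpoly_fun_mul; first exact: ps_kpoly_fun_cst.
apply: ps_kpoly_fun_big => [|i]; first exact: ps_kpoly_fun_mul.
exact: ps_kpoly_fun_pow.
Qed.

End CoefficientwisePolynomial.

Section OrderEquation.
Variables (K : fieldType) (n : nat).

Lemma leq_mdeg (b : mono n) (j : 'I_n) : (b j <= mdeg b)%N.
Proof. by rewrite /mdeg (bigD1 j) //= leq_addr. Qed.

Definition mono_of_bounded (d : nat) (al : {ffun 'I_n -> 'I_d}) : mono n :=
  [ffun j => nat_of_ord (al j)].

Lemma mono_of_bounded_inj (d : nat) : injective (@mono_of_bounded d).
Proof.
move=> al1 al2 e; apply/ffunP => j; apply: val_inj.
by have := congr1 (fun b : mono n => b j) e; rewrite !ffunE.
Qed.

Lemma mono_of_boundedK (b : mono n) :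
  mono_of_bounded [ffun j => inord (b j) : 'I_(mdeg b).+1] = b.
Proof. by apply/ffunP => j; rewrite !ffunE inordK // ltnS leq_mdeg. Qed.

Definition order_equation (y w : ps K n) (d : nat) : K :=
  \sum_(al : {ffun 'I_n -> 'I_d.+1} | mdeg (mono_of_bounded al) == d)
     y (mono_of_bounded al) * w (mono_of_bounded al) - 1.

Lemma order_equation_inverse (y : ps K n) (b0 : mono n) : y b0 != 0 ->
  order_equation y (fun b => if b == b0 then (y b)^-1 else 0) (mdeg b0) = 0.
Proof.
move=> yb0; rewrite /order_equation (bigD1 [ffun j => inord (b0 j)]) /=;
  last by rewrite mono_of_boundedK.
rewrite mono_of_boundedK eqxx mulfV // big1 ?addr0 ?subrr // => al /andP[_ ne_al].
rewrite -[b0 in _ == b0]mono_of_boundedK (inj_eq (@mono_of_bounded_inj _)).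
by rewrite (negbTE ne_al) mulr0.
Qed.

Lemma order_equation_coef (y w : ps K n) (d : nat) :
  order_equation y w d = 0 -> exists b, mdeg b = d /\ y b != 0.
Proof.
case: (boolP [exists al : {ffun 'I_n -> 'I_d.+1},
                (mdeg (mono_of_bounded al) == d) && (y (mono_of_bounded al) != 0)]).
  by case/existsP => al /andP[/eqP deg_al y_al]; exists (mono_of_bounded al).
rewrite negb_exists => /forallP no_coef.
rewrite /order_equation big1 ?sub0r => [/eqP|al deg_al]; first by rewrite oppr_eq0 oner_eq0.
by have := no_coef al; rewrite deg_al negbK => /eqP ->; rewrite mul0r.
Qed.

End OrderEquation.

Section CoefficientSystem.
Variables (K : fieldType) (hK : aleph0_complete K).
Variables (n m r : nat) (f : 'I_r -> pspoly K n m) (J : 'I_m -> {set 'I_n}) (c : mono m).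

Definition exact_solution (y : 'I_m -> ps K n) :=
  (forall i, in_subring (J i) (y i)) /\
  (forall k, ps_is0 (pseval (f k) y)) /\
  (forall i, ps_ord_eq (y i) (c i)).

Definition approx_solution (N : nat) (y : 'I_m -> ps K n) :=
  (forall i, in_subring (J i) (y i)) /\
  (forall k, in_pow_max_ideal (pseval (f k) y) N) /\
  (forall i, ps_ord_eq (y i) (c i)).

(* Left: the coefficients of the [y i]; right: the auxiliary unknowns of
   [order_equation].  Unknowns are numbered by [pickle]. *)
Definition unknown := (('I_m * mono n) + ('I_m * mono n))%type.

Definition coef_unknowns (z : nat -> K) : 'I_m -> ps K n :=
  fun i b => z (pickle (inl (i, b) : unknown)).

Definition aux_unknowns (z : nat -> K) : 'I_m -> ps K n :=
  fun i b => z (pickle (inr (i, b) : unknown)).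

Definition forced_zero (i : 'I_m) (b : mono n) : bool :=
  [exists j, (j \notin J i) && (b j != 0%N)] || (mdeg b < c i)%N.

Definition equation := ((('I_m * mono n) + ('I_r * mono n)) + 'I_m)%type.

Definition equation_fun (e : equation) (z : nat -> K) : K :=
  match e with
  | inl (inl (i, b)) => if forced_zero i b then coef_unknowns z i b else 0
  | inl (inr (k, b)) => pseval (f k) (coef_unknowns z) b
  | inr i => order_equation (coef_unknowns z i) (aux_unknowns z i) (c i)
  end.

Definition equation_degree (e : equation) : nat :=
  if e is inl (inr (_, b)) then mdeg b else 0.

Lemma kpoly_fun_equation (e : equation) : kpoly_fun (equation_fun e).
Proof.
have coef_var i b : kpoly_fun (fun z => coef_unknowns z i b).
  exact: kpoly_fun_var (pickle (inl (i, b) : unknown)).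
have aux_var i b : kpoly_fun (fun z => aux_unknowns z i b).
  exact: kpoly_fun_var (pickle (inr (i, b) : unknown)).
case: e => [[[i b]|[k b]]|i]; rewrite /equation_fun.
- by case: forced_zero; [exact: coef_var | exact: kpoly_fun_cst].
- exact: ps_kpoly_fun_pseval.
- apply: kpoly_fun_add (kpoly_fun_cst _); apply: kpoly_fun_sum => al.
  exact: kpoly_fun_mul.
Qed.

Lemma exact_solution_of_equations (z : nat -> K) :
  (forall e, equation_fun e z = 0) -> exact_solution (coef_unknowns z).
Proof.
move=> hz; split; [|split].
- move=> i b /existsP outside; have := hz (inl (inl (i, b))).
  by rewrite /= /forced_zero outside.
- by move=> k b; exact: (hz (inl (inr (k, b)))).
- move=> i; split; first exact: order_equation_coef (hz (inr i)).
  by move=> b lt_b; have := hz (inl (inl (i, b))); rewrite /= /forced_zero lt_b orbT.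
Qed.

Lemma equations_of_approx_solution (N : nat) (y : 'I_m -> ps K n) :
  approx_solution N y ->
  exists z : nat -> K, forall e, (equation_degree e < N)%N -> equation_fun e z = 0.
Proof.
case=> y_sub [y_approx y_ord].
have [b0 b0P] : exists b0 : 'I_m -> mono n, forall i, mdeg (b0 i) = c i /\ y i (b0 i) != 0.
  by apply: (functional_choice (fun i b => mdeg b = c i /\ y i b != 0)) => i; case: (y_ord i).
pose z j : K := match (unpickle j : option unknown) with
  | Some (inl (i, b)) => y i b
  | Some (inr (i, b)) => if b == b0 i then (y i b)^-1 else 0
  | None => 0
  end.
have zy : coef_unknowns z = y.
  by do 2!apply: functional_extensionality => ?; rewrite /coef_unknowns /z pickleK.
exists z => -[[[i b]|[k b]]|i] /= deg_e; rewrite zy.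
- case: ifP => // /orP[/existsP outside | lt_b]; first exact: y_sub.
  by case: (y_ord i) => _; apply.
- exact: y_approx.
- have [<- yb0] := b0P i; rewrite -(order_equation_inverse yb0); congr order_equation.
  by apply: functional_extensionality => b; rewrite /aux_unknowns /z pickleK.
Qed.

Lemma exact_solution_of_approx_solutions :
  (forall N, exists y, approx_solution N y) -> exists y, exact_solution y.
Proof.
move=> happrox.
pose system_fun j z := if (unpickle j : option equation) is Some e then equation_fun e z else 0.
pose system_degree j := if (unpickle j : option equation) is Some e then equation_degree e else 0%N.
have [S S_system] : exists S : nat -> kpoly K, forall j, keval (S j) =1 system_fun j.
  apply: (functional_choice (fun j p => keval p =1 system_fun j)) => j.
  rewrite /system_fun.
  by case: unpickle => [e|]; [exact: kpoly_fun_equation | exact: kpoly_fun_cst].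
have [z hz] : exists z, forall j, keval (S j) z = 0.
  apply/hK => F.
  have [y /equations_of_approx_solution[z hz]] := happrox (\max_(j <- F) system_degree j).+1.
  exists z => j jF; rewrite S_system /system_fun.
  case ej: unpickle => [e|] //; apply: hz; rewrite ltnS.
  by have := leq_bigmax_seq (F := system_degree) _ jF isT; rewrite /system_degree ej.
exists (coef_unknowns z); apply: exact_solution_of_equations => e.
by have := hz (pickle e); rewrite S_system /system_fun pickleK.
Qed.

Lemma approx_solution_threshold :
  exists N, forall y', approx_solution N y' -> exists y, exact_solution y.
Proof.
have [[y y_sol]|no_sol] := classic (exists y, exact_solution y).
  by exists 0%N => _ _; exists y.
have [N no_approx] : exists N, ~ exists y', approx_solution N y'.
  by apply: not_all_ex_not => all_approx; apply/no_sol/exact_solution_of_approx_solutions.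
by exists N => y' y'_approx; case: no_approx; exists y'.
Qed.

End CoefficientSystem.

Theorem corollary3p7 (K : fieldType) (hK : aleph0_complete K)
  (n m r : nat) (f : 'I_r -> pspoly K n m) (J : 'I_m -> {set 'I_n}) :
  exists nu : mono m -> nat,
    forall (c : mono m) (y' : 'I_m -> ps K n),
      (forall i, in_subring (J i) (y' i)) ->
      (forall k, in_pow_max_ideal (pseval (f k) y') (nu c)) ->
      (forall i, ps_ord_eq (y' i) (c i)) ->
      exists y : 'I_m -> ps K n,
        (forall i, in_subring (J i) (y i)) /\
        (forall k, ps_is0 (pseval (f k) y)) /\
        (forall i, ps_ord_eq (y i) (c i)).
Proof.
have [nu nuP] := functional_choice _ (approx_solution_threshold hK f J).
by exists nu => c y' y'_sub y'_approx y'_ord; exact: nuP (conj y'_sub (conj y'_approx y'_ord)).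
Qed.
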